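(* Let $H$ be a complex-valued harmonic function in $\mathbb{D}=\{|z|<1\}$ and let $u(z)=H(z)+\frac12(1-|z|^{2})\big(zH_z(z)+\overline{z}H_{\overline{z}}(z)\big)$. If $u$ maps $\mathbb{D}$ into $\mathbb{D}$, then there exists a constant $c$ with $0<c<\infty$ such that $$(1-|z|^{2})\big(|u_z(z)|+|u_{\overline{z}}(z)|\big)\le c\quad\text{for all } z\in\mathbb{D};$$ that is, $u$ is a Bloch function. *)

From Stdlib Require Import Reals.
From Coquelicot Require Import Coquelicot.
Open Scope R_scope.

Definition in_disk (z : C) : Prop := Cmod z < 1.

Definition dxr (g : C -> R) (z : C) : R :=
  Derive (fun t => g (t, Im z)) (Re z).
Definition dyr (g : C -> R) (z : C) : R :=
  Derive (fun t => g (Re z, t)) (Im z).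

Definition C2_on_disk (g : C -> R) : Prop :=
  forall z, in_disk z ->
    ex_derive (fun t => g (t, Im z)) (Re z) /\
    ex_derive (fun t => g (Re z, t)) (Im z) /\
    ex_derive (fun t => dxr g (t, Im z)) (Re z) /\
    ex_derive (fun t => dxr g (Re z, t)) (Im z) /\
    ex_derive (fun t => dyr g (t, Im z)) (Re z) /\
    ex_derive (fun t => dyr g (Re z, t)) (Im z) /\
    continuous g z /\
    continuous (dxr g) z /\ continuous (dyr g) z /\
    continuous (dxr (dxr g)) z /\ continuous (dyr (dxr g)) z /\
    continuous (dxr (dyr g)) z /\ continuous (dyr (dyr g)) z.

Definition real_harmonic_on_disk (g : C -> R) : Prop :=
  C2_on_disk g /\
  forall z, in_disk z -> dxr (dxr g) z + dyr (dyr g) z = 0.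

Definition harmonic_on_disk (H : C -> C) : Prop :=
  real_harmonic_on_disk (fun z => Re (H z)) /\
  real_harmonic_on_disk (fun z => Im (H z)).

Definition dx (f : C -> C) (z : C) : C :=
  (dxr (fun w => Re (f w)) z, dxr (fun w => Im (f w)) z).
Definition dy (f : C -> C) (z : C) : C :=
  (dyr (fun w => Re (f w)) z, dyr (fun w => Im (f w)) z).

Definition dz (f : C -> C) (z : C) : C :=
  (/ 2 * (dx f z - Ci * dy f z))%C.
Definition dzb (f : C -> C) (z : C) : C :=
  (/ 2 * (dx f z + Ci * dy f z))%C.

Definition u_of (H : C -> C) (z : C) : C :=
  (H z + / 2 * RtoC (1 - Cmod z ^ 2) * (z * dz H z + Cconj z * dzb H z))%C.

(* Write H = h1 + i h2 and u_j = h_j + (1 - |z|^2)/2 (x h_j,x + y h_j,y), so that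
   u = u_1 + i u_2 and |u_j| < 1 on the disk.

   First |h_j| <= 1: the strictly subharmonic function h_j + eps |z|^2 attains its maximum
   over a closed disk |z| <= r on the circle, where its radial derivative is nonnegative;
   there x h_j,x + y h_j,y >= - 2 eps r^2, so h_j <= u_j + eps < 1 + eps.

   Then the interior estimates: if |h| <= 1 on a square of side 2a, the gradient of h at its
   centre is at most 2/a (maximum principle for a barrier on a half square), and applying
   this to difference quotients bounds the second derivatives by 4/a^2 when |h| <= 1 on the
   concentric square of side 6a.  Taking a = (1 - |z|)/8 gives |D h_j| <= 16/(1 - |z|) and
   |D^2 h_j| <= 256/(1 - |z|)^2, so each term of (1 - |z|^2) |D u_j| is bounded by an
   absolute constant; finally |u_z| + |u_zbar| <= sum_j |u_j,x| + |u_j,y|. *)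

From Stdlib Require Import Reals Lra Psatz Classical ClassicalEpsilon.
From Coquelicot Require Import Coquelicot.
From Stdlib Require List.
Open Scope R_scope.

(** * Functions of one real variable *)

Lemma is_derive_increments (f : R -> R) x l eps :
  is_derive f x l -> 0 < eps -> exists d, 0 < d /\ forall h, 0 < h < d ->
    (l - eps) * h <= f (x + h) - f x <= (l + eps) * h /\
    - (l + eps) * h <= f (x - h) - f x <= - (l - eps) * h.
Proof.
  intros Hd He. apply is_derive_Reals in Hd.
  destruct (Hd eps He) as [d Hdd].
  exists d; split; [apply cond_pos |].
  intros h [h0 hd].
  assert (Right := Hdd h (Rgt_not_eq _ _ h0) ltac:(rewrite Rabs_pos_eq; lra)).
  assert (Left := Hdd (- h) ltac:(lra) ltac:(rewrite Rabs_Ropp, Rabs_pos_eq; lra)).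
  apply Rabs_lt_between in Right. apply Rabs_lt_between in Left.
  replace (x + - h) with (x - h) in Left by ring.
  set (q1 := f (x + h) - f x) in *. set (q2 := f (x - h) - f x) in *.
  replace q1 with (q1 / h * h) by (field; lra).
  replace q2 with (q2 / - h * - h) by (field; lra).
  generalize dependent (q1 / h). generalize dependent (q2 / - h).
  intros r2 Left r1 Right. split; split; nra.
Qed.

Lemma Rmin_half_bounds d e : 0 < d -> 0 < e -> 0 < Rmin d e / 2 < d /\ Rmin d e / 2 < e.
Proof.
  intros Hd He. pose proof (Rmin_l d e). pose proof (Rmin_r d e).
  pose proof (Rmin_glb_lt _ _ _ Hd He). lra.
Qed.

Lemma is_derive_le_of_right_increments (f : R -> R) x l K d :
  is_derive f x l -> 0 < d ->
  (forall h, 0 < h < d -> f (x + h) - f x <= K * h) -> l <= K.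
Proof.
  intros Hd Hd0 Hinc. apply Rnot_lt_le. intros HK.
  destruct (is_derive_increments f x l ((l - K) / 2) Hd ltac:(lra)) as [e [He Hh]].
  destruct (Rmin_half_bounds d e Hd0 He) as [[H0 Hd'] He'].
  destruct (Hh (Rmin d e / 2) ltac:(lra)) as [[A _] _].
  specialize (Hinc (Rmin d e / 2) ltac:(lra)). nra.
Qed.

Lemma is_derive_ge_of_left_increments (f : R -> R) x l K d :
  is_derive f x l -> 0 < d ->
  (forall h, 0 < h < d -> f (x - h) - f x <= K * h) -> - K <= l.
Proof.
  intros Hd Hd0 Hinc. apply Rnot_lt_le. intros HK.
  destruct (is_derive_increments f x l ((- K - l) / 2) Hd ltac:(lra)) as [e [He Hh]].
  destruct (Rmin_half_bounds d e Hd0 He) as [[H0 Hd'] He'].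
  destruct (Hh (Rmin d e / 2) ltac:(lra)) as [_ [A _]].
  specialize (Hinc (Rmin d e / 2) ltac:(lra)). nra.
Qed.

Lemma is_derive_le_of_symmetric_increments (f : R -> R) x l K d :
  is_derive f x l -> 0 < d ->
  (forall h, 0 < h < d -> f (x + h) - f (x - h) <= 2 * K * h) -> l <= K.
Proof.
  intros Hd Hd0 Hinc. apply Rnot_lt_le. intros HK.
  destruct (is_derive_increments f x l ((l - K) / 2) Hd ltac:(lra)) as [e [He Hh]].
  destruct (Rmin_half_bounds d e Hd0 He) as [[H0 Hd'] He'].
  destruct (Hh (Rmin d e / 2) ltac:(lra)) as [[A _] [_ B]].
  specialize (Hinc (Rmin d e / 2) ltac:(lra)). nra.
Qed.

Lemma Rabs_is_derive_le (f : R -> R) x l K d :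
  is_derive f x l -> 0 < d ->
  (forall h, 0 < h < d -> Rabs (f (x + h) - f x) <= K * h) -> Rabs l <= K.
Proof.
  intros Hd Hd0 Hinc. apply Rabs_le_between. split.
  - cut (- l <= K); [lra |].
    apply (is_derive_le_of_right_increments (fun t => - f t) x (- l) K d); auto.
    + apply (is_derive_opp f x l Hd).
    + intros h Hh. specialize (Hinc h Hh). apply Rabs_le_between in Hinc. lra.
  - apply (is_derive_le_of_right_increments f x l K d Hd Hd0).
    intros h Hh. specialize (Hinc h Hh). apply Rabs_le_between in Hinc. lra.
Qed.

Lemma Derive_eq_0_at_local_max (f : R -> R) x r :
  0 < r -> ex_derive f x -> (forall t, Rabs (t - x) < r -> f t <= f x) ->
  Derive f x = 0.
Proof.
  intros Hr Hd Hmax. pose proof (Derive_correct f x Hd) as D.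
  assert (Derive f x <= 0).
  { apply (is_derive_le_of_right_increments f x _ 0 r D Hr). intros h Hh.
    assert (f (x + h) <= f x) by (apply Hmax; rewrite Rabs_pos_eq; lra). lra. }
  assert (- 0 <= Derive f x).
  { apply (is_derive_ge_of_left_increments f x _ 0 r D Hr). intros h Hh.
    assert (f (x - h) <= f x) by (apply Hmax; rewrite Rabs_left; lra). lra. }
  lra.
Qed.

Lemma Derive2_le_0_at_local_max (f : R -> R) x r :
  0 < r -> (forall t, Rabs (t - x) < r -> ex_derive f t) ->
  ex_derive (Derive f) x -> (forall t, Rabs (t - x) < r -> f t <= f x) ->
  Derive (Derive f) x <= 0.
Proof.
  intros Hr Hd Hd2 Hmax.
  assert (F0 : Derive f x = 0).
  { apply (Derive_eq_0_at_local_max f x r Hr); auto.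
    apply Hd. rewrite Rminus_diag, Rabs_R0; lra. }
  apply Rnot_lt_le. intro HL. set (L := Derive (Derive f) x) in *.
  destruct (is_derive_increments (Derive f) x L (L / 2) (Derive_correct _ _ Hd2)
              ltac:(lra)) as [e [He Hh]].
  destruct (Rmin_half_bounds r e Hr He) as [[H1 H2] H3]. set (h := Rmin r e / 2) in *.
  (* f - L/4 (t - x)^2 has nonnegative derivative on [x, x + h], yet decreases there *)
  assert (Dk : forall c, x <= c <= x + h ->
     derivable_pt_lim (fun t => f t - L / 4 * (t - x) ^ 2) c (Derive f c - L / 2 * (c - x))).
  { intros c Hc. apply is_derive_Reals. auto_derive.
    - apply Hd. rewrite Rabs_pos_eq; lra.
    - simpl. change (fun t => f t) with f. clearbody L h. generalize (Derive f c). intros. lra. }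
  destruct (MVT_cor2 _ _ x (x + h) ltac:(lra) Dk) as [c [Ec Hc]].
  assert (Pc : 0 <= Derive f c - L / 2 * (c - x)).
  { destruct (Hh (c - x) ltac:(lra)) as [[A _] _].
    replace (x + (c - x)) with c in A by ring. rewrite F0 in A. nra. }
  assert (f (x + h) <= f x) by (apply Hmax; rewrite Rabs_pos_eq; lra).
  revert Ec Pc. generalize (Derive f c - L / 2 * (c - x)). intros r0 Ec Pc.
  replace (x + h - x) with h in Ec by ring.
  replace ((x - x) ^ 2) with 0 in Ec by ring. replace (h ^ 2) with (h * h) in Ec by ring.
  assert (0 <= r0 * h) by (apply Rmult_le_pos; lra).
  assert (0 < L / 4 * (h * h)) by (apply Rmult_lt_0_compat; nra).
  lra.
Qed.

(** * Compactness in the plane *)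

Lemma locally_box (z : C) (P : C -> Prop) :
  locally z P <-> exists r, 0 < r /\
    forall x y, Rabs (x - Re z) < r -> Rabs (y - Im z) < r -> P (x, y).
Proof.
  split.
  - intros [r Hr]. exists r. split; [apply cond_pos |].
    intros x y Hx Hy. apply Hr. split; assumption.
  - intros [r [Hr HP]]. exists (mkposreal r Hr). intros [x y] [Hx Hy]. apply HP; assumption.
Qed.

Lemma continuous_box (g : C -> R) z eps : continuous g z -> 0 < eps ->
  exists r, 0 < r /\
    forall x y, Rabs (x - Re z) < r -> Rabs (y - Im z) < r -> Rabs (g (x, y) - g z) < eps.
Proof.
  intros Hg He. apply (locally_box z (fun w => Rabs (g w - g z) < eps)).
  exact (proj1 (filterlim_locally g (g z)) Hg (mkposreal eps He)).
Qed.

Lemma not_closed_box (K : C -> Prop) z : closed K -> ~ K z ->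
  exists r, 0 < r /\
    forall x y, Rabs (x - Re z) < r -> Rabs (y - Im z) < r -> ~ K (x, y).
Proof.
  intros HK Kz. apply (locally_box z (fun w => ~ K w)). apply NNPP. intros Hn. exact (Kz (HK z Hn)).
Qed.

Definition rect a b c d (z : C) : Prop := a <= Re z <= b /\ c <= Im z <= d.

Lemma continuous_Re (z : C) : continuous Re z.
Proof. destruct z. apply continuous_fst. Qed.

Lemma continuous_Im (z : C) : continuous Im z.
Proof. destruct z. apply continuous_snd. Qed.

Lemma closed_rect a b c d : closed (rect a b c d).
Proof.
  assert (HRe : forall P : R -> Prop, closed P -> closed (fun z : C => P (Re z))).
  { intros P HP. apply closed_comp; [intros; apply continuous_Re | exact HP]. }
  assert (HIm : forall P : R -> Prop, closed P -> closed (fun z : C => P (Im z))).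
  { intros P HP. apply closed_comp; [intros; apply continuous_Im | exact HP]. }
  unfold rect. repeat apply closed_and.
  - apply (HRe (fun u => a <= u)), closed_ge.
  - apply (HRe (fun u => u <= b)), closed_le.
  - apply (HIm (fun u => c <= u)), closed_ge.
  - apply (HIm (fun u => u <= d)), closed_le.
Qed.

Lemma list_upper_bound {T} (l : list T) (g : T -> R) :
  exists B, forall t, List.In t l -> g t <= B.
Proof.
  induction l as [| a l [B HB]].
  - exists 0. intros t [].
  - exists (Rmax B (g a)). intros t [<- | Ht].
    + apply Rmax_r.
    + eapply Rle_trans; [apply HB; auto | apply Rmax_l].
Qed.

Lemma list_upper_bound_lt {T} (l : list T) (g : T -> R) (P : T -> Prop) S :
  (forall t, List.In t l -> P t -> g t < S) ->
  exists B, B < S /\ forall t, List.In t l -> P t -> g t <= B.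
Proof.
  induction l as [| a l IH]; intros H.
  - exists (S - 1). split; [lra |]. intros t [].
  - destruct IH as [B [HBS HB]]. { intros t Ht. apply H; simpl; auto. }
    destruct (classic (P a)) as [Pa | nPa].
    + exists (Rmax B (g a)). split.
      * apply Rmax_lub_lt; auto. apply H; simpl; auto.
      * intros t [<- | Ht] Pt; [apply Rmax_r |].
        eapply Rle_trans; [apply HB; auto | apply Rmax_l].
    + exists B. split; auto. intros t [<- | Ht] Pt; [contradiction | auto].
Qed.

Section ExtremeValue.
Variables (K : C -> Prop) (f : C -> R) (a b c d : R).
Hypothesis K_closed : closed K.
Hypothesis K_bounded : forall z, K z -> rect a b c d z.
Hypothesis f_continuous : forall z, K z -> continuous f z.

Let point (t : Compactness.Tn 2 R) : C := (fst t, fst (snd t)).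

Lemma finite_subcover (eta : C -> R) : (forall z, K z -> 0 < eta z) ->
  exists l : list C, forall x, K x -> exists t, List.In t l /\ K t /\ f x < f t + eta t.
Proof.
  intros Heta.
  assert (Hdelta : forall t, exists r : posreal,
     (K (point t) -> forall x y, Rabs (x - Re (point t)) < r -> Rabs (y - Im (point t)) < r ->
                     Rabs (f (x, y) - f (point t)) < eta (point t)) /\
     (~ K (point t) -> forall x y, Rabs (x - Re (point t)) < r -> Rabs (y - Im (point t)) < r ->
                     ~ K (x, y))).
  { intro t. destruct (classic (K (point t))) as [Kt | nKt].
    - destruct (continuous_box f _ _ (f_continuous _ Kt) (Heta _ Kt)) as [r [Hr Hbox]].
      exists (mkposreal r Hr). split; [intros _; exact Hbox | tauto].
    - destruct (not_closed_box K _ K_closed nKt) as [r [Hr Hbox]].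
      exists (mkposreal r Hr). split; [tauto | intros _; exact Hbox]. }
  destruct (choice _ Hdelta) as [delta Hd].
  destruct (classic (exists l : list (Compactness.Tn 2 R),
     forall x, Compactness.bounded_n 2 (a, (c, tt)) (b, (d, tt)) x ->
       exists t, List.In t l /\ Compactness.bounded_n 2 (a, (c, tt)) (b, (d, tt)) t /\
                 Compactness.close_n 2 (delta t) x t)) as [[l Hl] | Hn].
  2: { destruct (Compactness.compactness_list 2 _ _ delta Hn). }
  exists (List.map point l). intros [x y] Kxy.
  destruct (K_bounded _ Kxy) as [Bx By].
  destruct (Hl (x, (y, tt))) as [[t1 [t2 []]] [Hin [_ [C1 [C2 _]]]]]; [simpl; tauto |].
  exists (point (t1, (t2, tt))). split; [apply List.in_map; auto |].
  destruct (Hd (t1, (t2, tt))) as [D1 D2].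
  destruct (classic (K (point (t1, (t2, tt))))) as [Kt | nKt].
  - split; auto. specialize (D1 Kt x y C1 C2). apply Rabs_lt_between in D1. lra.
  - destruct (D2 nKt x y C1 C2 Kxy).
Qed.

Lemma continuous_attains_max :
  (exists z, K z) -> exists p, K p /\ forall q, K q -> f q <= f p.
Proof.
  intros Hne.
  set (E := fun v => exists z, K z /\ v = f z).
  assert (Ebound : bound E).
  { destruct (finite_subcover (fun _ => 1)) as [l Hl]; [intros; lra |].
    destruct (list_upper_bound l f) as [B HB].
    exists (B + 1). intros v [z [Kz ->]]. destruct (Hl z Kz) as [t [It [_ Ht]]].
    specialize (HB t It). lra. }
  assert (Ene : exists v, E v) by (destruct Hne as [z Kz]; exists (f z), z; auto).
  destruct (completeness E Ebound Ene) as [S [HS1 HS2]].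
  destruct (classic (exists p, K p /\ f p = S)) as [[p [Kp Ep]] | Hno].
  { exists p. split; auto. intros q Kq. rewrite Ep. apply HS1. exists q; auto. }
  exfalso.
  assert (Hlt : forall z, K z -> f z < S).
  { intros z Kz. assert (f z <= S) by (apply HS1; exists z; auto).
    destruct (Rle_lt_or_eq_dec _ _ H) as [| Heq]; auto. destruct Hno. exists z; auto. }
  (* covering K by neighbourhoods where f < (S + f t) / 2 pushes the supremum below S *)
  destruct (finite_subcover (fun z => (S - f z) / 2)) as [l Hl].
  { intros z Kz. specialize (Hlt z Kz). lra. }
  destruct (list_upper_bound_lt l (fun t => (S + f t) / 2) K S) as [B [HBS HB]].
  { intros t _ Kt. specialize (Hlt t Kt). lra. }
  assert (S <= B); [| lra].
  apply HS2. intros v [z [Kz ->]]. destruct (Hl z Kz) as [t [It [Kt Ht]]].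
  specialize (HB t It Kt). simpl in HB. lra.
Qed.
End ExtremeValue.

(** * The maximum principle *)

Lemma continuous_Rplus (f g : C -> R) z :
  continuous f z -> continuous g z -> continuous (fun w => f w + g w) z.
Proof. exact (continuous_plus f g z). Qed.

Lemma continuous_Rmult (f g : C -> R) z :
  continuous f z -> continuous g z -> continuous (fun w => f w * g w) z.
Proof. exact (continuous_mult f g z). Qed.

Lemma locally_line_x (U : C -> Prop) z : locally z U -> locally (Re z) (fun t => U (t, Im z)).
Proof.
  intros HU. apply locally_box in HU. destruct HU as [r [Hr HU]].
  exists (mkposreal r Hr). intros t Ht. apply HU; [exact Ht |].
  rewrite Rminus_diag, Rabs_R0. exact Hr.
Qed.

Lemma locally_line_y (U : C -> Prop) z : locally z U -> locally (Im z) (fun t => U (Re z, t)).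
Proof.
  intros HU. apply locally_box in HU. destruct HU as [r [Hr HU]].
  exists (mkposreal r Hr). intros t Ht. apply HU; [| exact Ht].
  rewrite Rminus_diag, Rabs_R0. exact Hr.
Qed.

Definition regular_on (U : C -> Prop) (g : C -> R) : Prop :=
  forall z, U z ->
    ex_derive (fun t => g (t, Im z)) (Re z) /\
    ex_derive (fun t => g (Re z, t)) (Im z) /\
    ex_derive (fun t => dxr g (t, Im z)) (Re z) /\
    ex_derive (fun t => dyr g (Re z, t)) (Im z) /\
    continuous g z.

Definition laplacian (g : C -> R) (z : C) : R := dxr (dxr g) z + dyr (dyr g) z.

Lemma laplacian_le_0_at_local_max U g p : regular_on U g ->
  locally p (fun z => U z /\ g z <= g p) -> laplacian g p <= 0.
Proof.
  intros Hg Hmax. apply locally_box in Hmax. destruct Hmax as [r [Hr Hmax]].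
  destruct p as [x y]. simpl in Hmax.
  assert (Hline : forall x' y', Rabs (x' - x) < r -> Rabs (y' - y) < r ->
                    U (x', y') /\ g (x', y') <= g (x, y)) by exact Hmax.
  assert (Hr0 : Rabs (0 : R) < r) by (rewrite Rabs_R0; exact Hr).
  assert (Uxy : U (x, y)) by (apply Hline; rewrite Rminus_diag; exact Hr0).
  destruct (Hg _ Uxy) as [_ [_ [Hxx [Hyy _]]]].
  assert (dxr (dxr g) (x, y) <= 0).
  { apply (Derive2_le_0_at_local_max (fun t => g (t, y)) x r Hr); [| exact Hxx |];
      intros t Ht; assert (Ut := Hline t y Ht ltac:(rewrite Rminus_diag; exact Hr0)).
    - exact (proj1 (Hg _ (proj1 Ut))).
    - exact (proj2 Ut). }
  assert (dyr (dyr g) (x, y) <= 0).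
  { apply (Derive2_le_0_at_local_max (fun t => g (x, t)) y r Hr); [| exact Hyy |];
      intros t Ht; assert (Ut := Hline x t ltac:(rewrite Rminus_diag; exact Hr0) Ht).
    - exact (proj1 (proj2 (Hg _ (proj1 Ut)))).
    - exact (proj2 Ut). }
  unfold laplacian. lra.
Qed.

Lemma max_on_boundary_of_laplacian_pos (K U : C -> Prop) (g : C -> R) a b c d :
  closed K -> (forall z, K z -> rect a b c d z) -> (exists z, K z) ->
  (forall z, K z -> U z) -> regular_on U g ->
  (forall z, K z -> locally z K -> 0 < laplacian g z) ->
  exists p, K p /\ ~ locally p K /\ forall q, K q -> g q <= g p.
Proof.
  intros Hcl Hbox Hne HKU Hg Hlap.
  destruct (continuous_attains_max K g a b c d Hcl Hbox) as [p [Kp Hp]]; auto.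
  { intros z Kz. apply (Hg z (HKU z Kz)). }
  exists p. split; [exact Kp | split; [| exact Hp]].
  intros Hint. pose proof (Hlap p Kp Hint).
  assert (laplacian g p <= 0); [| lra].
  apply (laplacian_le_0_at_local_max U g p Hg).
  apply (filter_imp K); [| exact Hint]. intros z Kz. auto.
Qed.

Section Scale.
Variables (U : C -> Prop) (g : C -> R) (k : R).

Lemma dxr_scal z : dxr (fun w => k * g w) z = k * dxr g z.
Proof. apply Derive_scal. Qed.

Lemma dyr_scal z : dyr (fun w => k * g w) z = k * dyr g z.
Proof. apply Derive_scal. Qed.

Lemma regular_scal : regular_on U g -> regular_on U (fun w => k * g w).
Proof.
  intros Hg z Uz. destruct (Hg _ Uz) as [A [B [Cx [Dy E]]]].
  repeat split.
  - apply ex_derive_scal. exact A.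
  - apply ex_derive_scal. exact B.
  - apply (ex_derive_ext (fun t => k * dxr g (t, Im z))).
    + intro t. symmetry. apply dxr_scal.
    + apply ex_derive_scal. exact Cx.
  - apply (ex_derive_ext (fun t => k * dyr g (Re z, t))).
    + intro t. symmetry. apply dyr_scal.
    + apply ex_derive_scal. exact Dy.
  - apply continuous_Rmult; [apply continuous_const | exact E].
Qed.

Lemma laplacian_scal z : laplacian (fun w => k * g w) z = k * laplacian g z.
Proof.
  unfold laplacian, dxr at 1, dyr at 1.
  rewrite (Derive_ext _ (fun t => k * dxr g (t, Im z))) by (intro t; apply dxr_scal).
  rewrite (Derive_ext (fun t => dyr (fun w => k * g w) (Re z, t)) (fun t => k * dyr g (Re z, t)))
    by (intro t; apply dyr_scal).
  rewrite !Derive_scal. unfold dxr, dyr. ring.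
Qed.
End Scale.

Section Sum.
Variables (U1 U2 : C -> Prop) (g1 g2 : C -> R).
Hypothesis U1_open : open U1.
Hypothesis U2_open : open U2.
Hypothesis g1_regular : regular_on U1 g1.
Hypothesis g2_regular : regular_on U2 g2.
Let U z := U1 z /\ U2 z.
Let g z := g1 z + g2 z.

Lemma dxr_plus z : U z -> dxr g z = dxr g1 z + dxr g2 z.
Proof.
  intros [U1z U2z]. apply Derive_plus.
  - exact (proj1 (g1_regular _ U1z)).
  - exact (proj1 (g2_regular _ U2z)).
Qed.

Lemma dyr_plus z : U z -> dyr g z = dyr g1 z + dyr g2 z.
Proof.
  intros [U1z U2z]. apply Derive_plus.
  - exact (proj1 (proj2 (g1_regular _ U1z))).
  - exact (proj1 (proj2 (g2_regular _ U2z))).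
Qed.

Lemma dxr_plus_near z : U z ->
  locally (Re z) (fun t : R => dxr g (t, Im z) = dxr g1 (t, Im z) + dxr g2 (t, Im z)).
Proof.
  intros Uz. apply (filter_imp (fun t => U (t, Im z))).
  - intros t Ut. exact (dxr_plus _ Ut).
  - apply locally_line_x, (locally_open U); auto. apply open_and; auto.
Qed.

Lemma dyr_plus_near z : U z ->
  locally (Im z) (fun t : R => dyr g (Re z, t) = dyr g1 (Re z, t) + dyr g2 (Re z, t)).
Proof.
  intros Uz. apply (filter_imp (fun t => U (Re z, t))).
  - intros t Ut. exact (dyr_plus _ Ut).
  - apply locally_line_y, (locally_open U); auto. apply open_and; auto.
Qed.

Lemma regular_plus : regular_on U g.
Proof.
  intros z Uz. pose proof Uz as [U1z U2z].
  destruct (g1_regular _ U1z) as [A1 [B1 [C1 [D1 E1]]]].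
  destruct (g2_regular _ U2z) as [A2 [B2 [C2 [D2 E2]]]].
  repeat split.
  - apply (ex_derive_plus (fun t => g1 (t, Im z)) (fun t => g2 (t, Im z))); assumption.
  - apply (ex_derive_plus (fun t => g1 (Re z, t)) (fun t => g2 (Re z, t))); assumption.
  - apply (ex_derive_ext_loc (fun t => dxr g1 (t, Im z) + dxr g2 (t, Im z))).
    + apply (filter_imp _ _ (fun t Ht => eq_sym Ht) (dxr_plus_near z Uz)).
    + apply (ex_derive_plus (fun t => dxr g1 (t, Im z)) (fun t => dxr g2 (t, Im z))); assumption.
  - apply (ex_derive_ext_loc (fun t => dyr g1 (Re z, t) + dyr g2 (Re z, t))).
    + apply (filter_imp _ _ (fun t Ht => eq_sym Ht) (dyr_plus_near z Uz)).
    + apply (ex_derive_plus (fun t => dyr g1 (Re z, t)) (fun t => dyr g2 (Re z, t))); assumption.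
  - apply continuous_Rplus; assumption.
Qed.

Lemma laplacian_plus z : U z -> laplacian g z = laplacian g1 z + laplacian g2 z.
Proof.
  intros Uz. pose proof Uz as [U1z U2z].
  destruct (g1_regular _ U1z) as [_ [_ [C1 [D1 _]]]].
  destruct (g2_regular _ U2z) as [_ [_ [C2 [D2 _]]]].
  unfold laplacian, dxr at 1, dyr at 1.
  rewrite (Derive_ext_loc _ _ _ (dxr_plus_near z Uz)).
  rewrite (Derive_ext_loc _ _ _ (dyr_plus_near z Uz)).
  rewrite !Derive_plus by assumption. unfold dxr, dyr. ring.
Qed.
End Sum.

Lemma Derive_affine (f : R -> R) al s x : ex_derive f (al + s * x) ->
  Derive (fun t => f (al + s * t)) x = s * Derive f (al + s * x).
Proof.
  intros Hf.
  rewrite (Derive_comp f (fun t => al + s * t)) by (auto; auto_derive; auto).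
  f_equal. apply is_derive_unique. auto_derive; auto. ring.
Qed.

Lemma ex_derive_affine (f : R -> R) al s x : ex_derive f (al + s * x) ->
  ex_derive (fun t => f (al + s * t)) x.
Proof. intros Hf. apply (ex_derive_comp f (fun t => al + s * t)); auto. auto_derive; auto. Qed.

Lemma Derive_shift (f : R -> R) b x : Derive (fun t => f (b + t)) x = Derive f (b + x).
Proof.
  rewrite Rplus_comm.
  rewrite (Derive_ext _ (fun t => f (t + b))) by (intro; rewrite Rplus_comm; reflexivity).
  exact (Derive_n_comp_trans f 1 x b).
Qed.

Lemma ex_derive_shift (f : R -> R) b x : ex_derive f (b + x) ->
  ex_derive (fun t => f (b + t)) x.
Proof. intros Hf. apply (ex_derive_comp f (fun t => b + t)); auto. auto_derive; auto. Qed.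

Lemma Rabs_sign_mul s u : s = 1 \/ s = -1 -> Rabs (s * u) = Rabs u.
Proof.
  intros [-> | ->].
  - rewrite Rmult_1_l. reflexivity.
  - replace (-1 * u) with (- u) by ring. apply Rabs_Ropp.
Qed.

Definition shift_flip (al s be : R) (z : C) : C := (al + s * Re z, be + Im z).

Section ShiftFlip.
Variables (al s be : R).
Hypothesis s_sign : s = 1 \/ s = -1.
Let T := shift_flip al s be.

Lemma continuous_shift_flip (z : C) : continuous T z.
Proof.
  apply filterlim_locally. intros eps.
  apply (locally_box z (fun w => ball (T z) eps (T w))).
  exists eps. split; [apply cond_pos |]. intros x y Hx Hy. split; simpl.
  - change (Rabs (al + s * x - (al + s * Re z)) < eps).
    replace (al + s * x - (al + s * Re z)) with (s * (x - Re z)) by ring.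
    rewrite Rabs_sign_mul; auto.
  - change (Rabs (be + y - (be + Im z)) < eps).
    replace (be + y - (be + Im z)) with (y - Im z) by ring. exact Hy.
Qed.

Lemma open_shift_flip U : open U -> open (fun z => U (T z)).
Proof. apply open_comp. intros z _. apply continuous_shift_flip. Qed.

Variables (U : C -> Prop) (g : C -> R).
Hypothesis U_open : open U.
Hypothesis g_regular : regular_on U g.

Lemma dxr_shift_flip z : U (T z) -> dxr (fun w => g (T w)) z = s * dxr g (T z).
Proof.
  intros Uz. apply (Derive_affine (fun v => g (v, be + Im z))).
  exact (proj1 (g_regular _ Uz)).
Qed.

Lemma dyr_shift_flip z : dyr (fun w => g (T w)) z = dyr g (T z).
Proof. apply (Derive_shift (fun v => g (al + s * Re z, v))). Qed.

Lemma dxr_shift_flip_near z : U (T z) ->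
  locally (Re z) (fun t : R => dxr (fun w => g (T w)) (t, Im z) = s * dxr g (T (t, Im z))).
Proof.
  intros Uz. apply (filter_imp (fun t => U (T (t, Im z)))).
  - intros t Ut. exact (dxr_shift_flip _ Ut).
  - apply (locally_line_x (fun w => U (T w))), (locally_open (fun w => U (T w))); auto.
    apply open_shift_flip; auto.
Qed.

Lemma regular_shift_flip : regular_on (fun z => U (T z)) (fun w => g (T w)).
Proof.
  intros z Uz. destruct (g_regular _ Uz) as [A [B [Cx [Dy E]]]].
  repeat split.
  - apply (ex_derive_affine (fun v => g (v, be + Im z))). exact A.
  - apply (ex_derive_shift (fun v => g (al + s * Re z, v))). exact B.
  - apply (ex_derive_ext_loc (fun t => s * dxr g (al + s * t, be + Im z))).
    + apply (filter_imp _ _ (fun t Ht => eq_sym Ht) (dxr_shift_flip_near z Uz)).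
    + apply ex_derive_scal, (ex_derive_affine (fun v => dxr g (v, be + Im z))). exact Cx.
  - apply (ex_derive_ext (fun t => dyr g (al + s * Re z, be + t))).
    + intro t. symmetry. apply dyr_shift_flip.
    + apply (ex_derive_shift (fun v => dyr g (al + s * Re z, v))). exact Dy.
  - apply (continuous_comp T g); [apply continuous_shift_flip | exact E].
Qed.

Lemma laplacian_shift_flip z : U (T z) -> laplacian (fun w => g (T w)) z = laplacian g (T z).
Proof.
  intros Uz. destruct (g_regular _ Uz) as [_ [_ [Cx _]]].
  unfold laplacian. f_equal.
  - unfold dxr at 1. rewrite (Derive_ext_loc _ _ _ (dxr_shift_flip_near z Uz)).
    rewrite Derive_scal. unfold T, shift_flip. simpl.
    rewrite (Derive_affine (fun v => dxr g (v, be + Im z))) by exact Cx.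
    unfold dxr at 2. simpl.
    rewrite <- Rmult_assoc. replace (s * s) with 1 by (destruct s_sign as [-> | ->]; ring).
    apply Rmult_1_l.
  - unfold dyr at 1.
    rewrite (Derive_ext _ (fun t => dyr g (al + s * Re z, be + t)))
      by (intro t; apply dyr_shift_flip).
    apply (Derive_shift (fun v => dyr g (al + s * Re z, v))).
Qed.
End ShiftFlip.

Definition swap_xy (z : C) : C := (Im z, Re z).

Lemma laplacian_swap g z : laplacian (fun w => g (swap_xy w)) z = laplacian g (swap_xy z).
Proof. apply Rplus_comm. Qed.

Lemma continuous_swap (z : C) : continuous swap_xy z.
Proof.
  apply filterlim_locally. intros eps.
  apply (locally_box z (fun w => ball (swap_xy z) eps (swap_xy w))).
  exists eps. split; [apply cond_pos |]. intros x y Hx Hy. split; assumption.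
Qed.

Lemma open_swap U : open U -> open (fun z => U (swap_xy z)).
Proof. apply open_comp. intros z _. apply continuous_swap. Qed.

Lemma regular_swap U g :
  regular_on U g -> regular_on (fun z => U (swap_xy z)) (fun w => g (swap_xy w)).
Proof.
  intros Hg z Uz. destruct (Hg _ Uz) as [A [B [Cx [Dy E]]]].
  repeat split; try assumption.
  apply (continuous_comp swap_xy g); [apply continuous_swap | exact E].
Qed.

Definition quadratic (A B Cx : R) (z : C) : R := A * (Re z * Re z) + B * (Im z * Im z) + Cx * Re z.

Lemma dxr_quadratic A B Cx z : dxr (quadratic A B Cx) z = 2 * A * Re z + Cx.
Proof. apply is_derive_unique. unfold quadratic. simpl. auto_derive; auto. ring. Qed.

Lemma dyr_quadratic A B Cx z : dyr (quadratic A B Cx) z = 2 * B * Im z.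
Proof. apply is_derive_unique. unfold quadratic. simpl. auto_derive; auto. ring. Qed.

Lemma regular_quadratic A B Cx : regular_on (fun _ => True) (quadratic A B Cx).
Proof.
  intros z _. repeat split.
  - unfold quadratic. simpl. auto_derive. auto.
  - unfold quadratic. simpl. auto_derive. auto.
  - apply (ex_derive_ext (fun t => 2 * A * t + Cx)).
    + intro t. rewrite dxr_quadratic. reflexivity.
    + auto_derive. auto.
  - apply (ex_derive_ext (fun t => 2 * B * t)).
    + intro t. rewrite dyr_quadratic. reflexivity.
    + auto_derive. auto.
  - pose proof (continuous_Re z). pose proof (continuous_Im z).
    unfold quadratic. repeat first [apply continuous_Rplus | apply continuous_Rmult];
      first [apply continuous_const | assumption].
Qed.

Lemma laplacian_quadratic A B Cx z : laplacian (quadratic A B Cx) z = 2 * A + 2 * B.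
Proof.
  unfold laplacian. f_equal; apply is_derive_unique.
  - apply (is_derive_ext (fun t => 2 * A * t + Cx)).
    + intro t. rewrite dxr_quadratic. reflexivity.
    + auto_derive; auto. ring.
  - apply (is_derive_ext (fun t => 2 * B * t)).
    + intro t. rewrite dyr_quadratic. reflexivity.
    + auto_derive; auto. ring.
Qed.

Lemma rect_boundary a b c d z : rect a b c d z -> ~ locally z (rect a b c d) ->
  Re z = a \/ Re z = b \/ Im z = c \/ Im z = d.
Proof.
  intros [[H1 H2] [H3 H4]] Hn.
  destruct (Req_dec (Re z) a); auto. destruct (Req_dec (Re z) b); auto.
  destruct (Req_dec (Im z) c); auto. destruct (Req_dec (Im z) d); auto.
  destruct Hn. apply locally_box.
  assert (m1 := Rmin_l (Rmin (Re z - a) (b - Re z)) (Rmin (Im z - c) (d - Im z))).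
  assert (m2 := Rmin_r (Rmin (Re z - a) (b - Re z)) (Rmin (Im z - c) (d - Im z))).
  assert (m3 := Rmin_l (Re z - a) (b - Re z)). assert (m4 := Rmin_r (Re z - a) (b - Re z)).
  assert (m5 := Rmin_l (Im z - c) (d - Im z)). assert (m6 := Rmin_r (Im z - c) (d - Im z)).
  set (r := Rmin (Rmin (Re z - a) (b - Re z)) (Rmin (Im z - c) (d - Im z))) in *.
  exists r. split.
  - repeat apply Rmin_glb_lt; lra.
  - intros x y Hx Hy. apply Rabs_lt_between in Hx. apply Rabs_lt_between in Hy.
    unfold rect; simpl. lra.
Qed.

(** * Interior estimates for harmonic functions *)

Section GradientEstimate.
Variables (U : C -> Prop) (g : C -> R) (x0 y0 a M : R).
Hypothesis U_open : open U.
Hypothesis g_regular : regular_on U g.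
Hypothesis a_pos : 0 < a.
Let B := rect (x0 - a) (x0 + a) (y0 - a) (y0 + a).
Hypothesis B_sub_U : forall z, B z -> U z.
Hypothesis g_harmonic : forall z, B z -> laplacian g z = 0.
Hypothesis g_bounded : forall z, B z -> Rabs (g z) <= M.

Let K := rect 0 a (- a) a.

Lemma shift_flip_half_square s z : s = 1 \/ s = -1 -> K z -> B (shift_flip x0 s y0 z).
Proof.
  intros Hs [[H1 H2] [H3 H4]]. unfold B, rect, shift_flip. simpl.
  destruct Hs as [-> | ->]; split; split; lra.
Qed.

Section Barrier.
Variables (m eps : R).
Hypothesis m_scale : m * (a * a) = M.
Hypothesis eps_pos : 0 < eps.

(* The barrier proof of the interior gradient estimate: the odd part of [g] in the
   x-direction plus this quadratic is strictly subharmonic on the half square [K] and at most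
   [2 eps a^2] on its boundary, hence everywhere on [K]. *)
Let barrier z := (1/2) * g (shift_flip x0 1 y0 z) +
  ((-1/2) * g (shift_flip x0 (-1) y0 z) + quadratic (m + eps) (- m + eps) (- 2 * m * a) z).
Let V z := U (shift_flip x0 1 y0 z) /\ (U (shift_flip x0 (-1) y0 z) /\ True).

Let sign_pos : 1 = 1 \/ 1 = -1 := or_introl eq_refl.
Let sign_neg : -1 = 1 \/ -1 = -1 := or_intror eq_refl.
Let Up_open : open (fun z => U (shift_flip x0 1 y0 z)) :=
  open_shift_flip x0 1 y0 sign_pos U U_open.
Let Um_open : open (fun z => U (shift_flip x0 (-1) y0 z)) :=
  open_shift_flip x0 (-1) y0 sign_neg U U_open.
Let gp_regular :
  regular_on (fun z => U (shift_flip x0 1 y0 z)) (fun z => (1/2) * g (shift_flip x0 1 y0 z)) :=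
  regular_scal _ _ _ (regular_shift_flip x0 1 y0 sign_pos U g U_open g_regular).
Let gm_regular :
  regular_on (fun z => U (shift_flip x0 (-1) y0 z))
    (fun z => (-1/2) * g (shift_flip x0 (-1) y0 z)) :=
  regular_scal _ _ _ (regular_shift_flip x0 (-1) y0 sign_neg U g U_open g_regular).
Let odd_rest_regular : regular_on (fun z => U (shift_flip x0 (-1) y0 z) /\ True)
  (fun z => (-1/2) * g (shift_flip x0 (-1) y0 z) +
            quadratic (m + eps) (- m + eps) (- 2 * m * a) z) :=
  regular_plus _ _ _ _ Um_open open_true gm_regular (regular_quadratic _ _ _).

Lemma barrier_eq z : barrier z =
  (1/2) * (g (x0 + Re z, y0 + Im z) - g (x0 - Re z, y0 + Im z)) +
  (m + eps) * (Re z * Re z) + (- m + eps) * (Im z * Im z) - 2 * m * a * Re z.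
Proof.
  unfold barrier, quadratic, shift_flip. simpl.
  replace (x0 + 1 * Re z) with (x0 + Re z) by ring.
  replace (x0 + -1 * Re z) with (x0 - Re z) by ring. lra.
Qed.

Lemma barrier_laplacian z : K z -> laplacian barrier z = 4 * eps.
Proof.
  intros Kz.
  assert (Up := B_sub_U _ (shift_flip_half_square 1 z sign_pos Kz)).
  assert (Um := B_sub_U _ (shift_flip_half_square (-1) z sign_neg Kz)).
  unfold barrier.
  rewrite (laplacian_plus _ _ _ _ Up_open (open_and _ _ Um_open open_true) gp_regular
             odd_rest_regular z (conj Up (conj Um I))).
  rewrite (laplacian_plus _ _ _ _ Um_open open_true gm_regular (regular_quadratic _ _ _) z
             (conj Um I)).
  rewrite !laplacian_scal, laplacian_quadratic.
  rewrite (laplacian_shift_flip _ _ _ sign_pos U g U_open g_regular z Up).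
  rewrite (laplacian_shift_flip _ _ _ sign_neg U g U_open g_regular z Um).
  rewrite !g_harmonic by (apply shift_flip_half_square; auto). ring.
Qed.

Lemma barrier_regular : regular_on V barrier.
Proof.
  exact (regular_plus _ _ _ _ Up_open (open_and _ _ Um_open open_true) gp_regular odd_rest_regular).
Qed.

Lemma barrier_slope_nonneg : 0 <= m.
Proof.
  assert (0 <= M).
  { eapply Rle_trans; [apply Rabs_pos | apply (g_bounded (x0, y0))].
    unfold B, rect. simpl. lra. }
  destruct (Rle_or_lt 0 m) as [| Hm]; auto.
  assert (m * (a * a) < 0) by (apply Rmult_neg_pos; nra). lra.
Qed.

Lemma barrier_boundary_le p : K p -> ~ locally p K -> barrier p <= 2 * eps * (a * a).
Proof.
  intros Kp Hp. rewrite barrier_eq. pose proof barrier_slope_nonneg.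
  destruct Kp as [[K1 K2] [K3 K4]].
  assert (G1 : Rabs (g (x0 + Re p, y0 + Im p)) <= M).
  { apply g_bounded. unfold B, rect. simpl. lra. }
  assert (G2 : Rabs (g (x0 - Re p, y0 + Im p)) <= M).
  { apply g_bounded. unfold B, rect. simpl. lra. }
  apply Rabs_le_between in G1. apply Rabs_le_between in G2.
  assert (Im p * Im p <= a * a) by nra.
  assert (m * (Re p * (Re p - 2 * a)) <= 0) by (apply Rmult_le_0_l; nra).
  assert (eps * (Re p * Re p) <= eps * (a * a)) by (apply Rmult_le_compat_l; nra).
  assert (eps * (Im p * Im p) <= eps * (a * a)) by (apply Rmult_le_compat_l; nra).
  destruct (rect_boundary _ _ _ _ p (conj (conj K1 K2) (conj K3 K4)) Hp) as [E | [E | [E | E]]];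
    rewrite E in *.
  - replace (x0 + 0) with (x0 - 0) by ring. nra.
  - nra.
  - nra.
  - nra.
Qed.

Lemma symmetric_difference_le h : 0 < h < a ->
  g (x0 + h, y0) - g (x0 - h, y0) <= 2 * (2 * m * a) * h + 4 * eps * (a * a).
Proof.
  intros Hh.
  assert (KV : forall z, K z -> V z).
  { intros z Kz. repeat split; apply B_sub_U, shift_flip_half_square; auto. }
  destruct (max_on_boundary_of_laplacian_pos K V barrier 0 a (- a) a)
    as [p [Kp [Hp Hmax]]]; auto.
  - apply closed_rect.
  - exists (0, 0). unfold K, rect. simpl. lra.
  - apply barrier_regular.
  - intros z Kz _. rewrite barrier_laplacian; auto. lra.
  - assert (Kh : K (h, 0)) by (unfold K, rect; simpl; lra).
    pose proof (Rle_trans _ _ _ (Hmax _ Kh) (barrier_boundary_le p Kp Hp)) as Hh0.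
    rewrite barrier_eq in Hh0. simpl in Hh0. rewrite Rplus_0_r in Hh0.
    pose proof barrier_slope_nonneg. nra.
Qed.
End Barrier.

Lemma dxr_le_of_bounded_harmonic : dxr g (x0, y0) <= 2 * M / a.
Proof.
  set (m := M / (a * a)).
  assert (m_scale : m * (a * a) = M) by (unfold m; field; lra).
  replace (2 * M / a) with (2 * m * a) by (unfold m; field; lra).
  assert (U0 : U (x0, y0)) by (apply B_sub_U; unfold B, rect; simpl; lra).
  apply (is_derive_le_of_symmetric_increments (fun t => g (t, y0)) x0 _ _ a
           (Derive_correct _ _ (proj1 (g_regular _ U0))) a_pos).
  intros h Hh. apply le_epsilon. intros eps He.
  assert (Heps : 0 < eps / (4 * (a * a))) by (apply Rdiv_lt_0_compat; nra).
  pose proof (symmetric_difference_le m _ m_scale Heps h Hh) as Hd.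
  replace (4 * (eps / (4 * (a * a))) * (a * a)) with eps in Hd by (field; lra). lra.
Qed.
End GradientEstimate.

Lemma Rabs_dxr_le_of_bounded_harmonic U g x0 y0 a M : open U -> regular_on U g -> 0 < a ->
  let B := rect (x0 - a) (x0 + a) (y0 - a) (y0 + a) in
  (forall z, B z -> U z) -> (forall z, B z -> laplacian g z = 0) ->
  (forall z, B z -> Rabs (g z) <= M) -> Rabs (dxr g (x0, y0)) <= 2 * M / a.
Proof.
  intros HU Hg Ha B HB Hlap Hbd. apply Rabs_le_between. split.
  - cut (-1 * dxr g (x0, y0) <= 2 * M / a); [lra |]. rewrite <- dxr_scal.
    apply (dxr_le_of_bounded_harmonic U); auto.
    + apply regular_scal. exact Hg.
    + intros z Bz. rewrite laplacian_scal, Hlap; auto. ring.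
    + intros z Bz. rewrite Rabs_sign_mul; auto.
  - apply (dxr_le_of_bounded_harmonic U); auto.
Qed.

Lemma gradient_bound_of_bounded_harmonic U g x0 y0 a M : open U -> regular_on U g -> 0 < a ->
  let B := rect (x0 - a) (x0 + a) (y0 - a) (y0 + a) in
  (forall z, B z -> U z) -> (forall z, B z -> laplacian g z = 0) ->
  (forall z, B z -> Rabs (g z) <= M) ->
  Rabs (dxr g (x0, y0)) <= 2 * M / a /\ Rabs (dyr g (x0, y0)) <= 2 * M / a.
Proof.
  intros HU Hg Ha B HB Hlap Hbd. split.
  - apply (Rabs_dxr_le_of_bounded_harmonic U); auto.
  - change (Rabs (dxr (fun w => g (swap_xy w)) (y0, x0)) <= 2 * M / a).
    apply (Rabs_dxr_le_of_bounded_harmonic (fun z => U (swap_xy z)));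
      [apply open_swap | apply regular_swap | | | |]; auto;
      intros [y x] [Hy Hx]; [apply HB | rewrite laplacian_swap; apply Hlap | apply Hbd];
      split; assumption.
Qed.

Lemma Rabs_increment_le (f : R -> R) x s M : 0 < s ->
  (forall c, x <= c <= x + s -> ex_derive f c /\ Rabs (Derive f c) <= M) ->
  Rabs (f (x + s) - f x) <= M * s.
Proof.
  intros Hs Hf.
  assert (Hd : forall c, x <= c <= x + s -> derivable_pt_lim f c (Derive f c)).
  { intros c Hc. apply is_derive_Reals, Derive_correct, (Hf c Hc). }
  destruct (MVT_cor2 _ _ x (x + s) ltac:(lra) Hd) as [c [Ec Hc]].
  replace (x + s - x) with s in Ec by ring.
  rewrite Ec, Rabs_mult, (Rabs_pos_eq s) by lra.
  apply Rmult_le_compat_r; [lra | apply Hf; lra].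
Qed.

Section DifferenceQuotient.
Variables (U : C -> Prop) (g : C -> R) (x0 y0 a M1 : R).
Hypothesis U_open : open U.
Hypothesis g_regular : regular_on U g.
Hypothesis a_pos : 0 < a.
Let B2 := rect (x0 - 2 * a) (x0 + 2 * a) (y0 - 2 * a) (y0 + 2 * a).
Hypothesis B2_sub_U : forall z, B2 z -> U z.
Hypothesis g_harmonic : forall z, B2 z -> laplacian g z = 0.
Hypothesis dxr_bounded : forall z, B2 z -> Rabs (dxr g z) <= M1.

Variable s : R.
Hypothesis s_range : 0 < s < a.
Let T := shift_flip s 1 0.
Let B1 := rect (x0 - a) (x0 + a) (y0 - a) (y0 + a).
Let UT_open : open (fun z => U (T z)) := open_shift_flip s 1 0 (or_introl eq_refl) U U_open.

Let gT_scaled_regular : regular_on (fun z => U (T z)) (fun z => (1 / s) * g (T z)).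
Proof. apply regular_scal, regular_shift_flip; auto. Qed.

Let g_scaled_regular : regular_on U (fun z => (-1 / s) * g z).
Proof. apply regular_scal; auto. Qed.

Definition difference_quotient z := (1 / s) * g (T z) + (-1 / s) * g z.

Lemma shifts_in_domain z : B1 z -> U (T z) /\ U z.
Proof.
  intros [[H1 H2] [H3 H4]].
  split; apply B2_sub_U; unfold B2, rect, T, shift_flip; simpl in *; lra.
Qed.

Lemma difference_quotient_regular : regular_on (fun z => U (T z) /\ U z) difference_quotient.
Proof. apply regular_plus; auto. Qed.

Lemma difference_quotient_harmonic z : B1 z -> laplacian difference_quotient z = 0.
Proof.
  intros Bz. pose proof (shifts_in_domain z Bz) as [UTz Uz].
  unfold difference_quotient.
  rewrite (laplacian_plus _ _ _ _ UT_open U_open gT_scaled_regular g_scaled_regular z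
             (conj UTz Uz)).
  rewrite !laplacian_scal. unfold T in *.
  rewrite (laplacian_shift_flip s 1 0 (or_introl eq_refl) U g U_open g_regular z UTz).
  destruct Bz as [[H1 H2] [H3 H4]].
  rewrite !g_harmonic by (unfold B2, rect, shift_flip; simpl in *; lra). ring.
Qed.

Lemma difference_quotient_bounded z : B1 z -> Rabs (difference_quotient z) <= M1.
Proof.
  destruct z as [x y]. intros [[H1 H2] [H3 H4]]. simpl in *.
  unfold difference_quotient, T, shift_flip. simpl.
  replace (s + 1 * x) with (x + s) by ring. rewrite Rplus_0_l.
  replace (1 / s * g (x + s, y) + -1 / s * g (x, y)) with ((g (x + s, y) - g (x, y)) / s)
    by (field; lra).
  unfold Rdiv. rewrite Rabs_mult, Rabs_inv, (Rabs_pos_eq s) by lra.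
  apply (Rmult_le_reg_r s); [lra |]. rewrite Rmult_assoc, Rinv_l, Rmult_1_r by lra.
  apply (Rabs_increment_le (fun t => g (t, y))); [lra |]. intros c Hc.
  assert (Bc : B2 (c, y)) by (unfold B2, rect; simpl; lra).
  split; [exact (proj1 (g_regular _ (B2_sub_U _ Bc))) | exact (dxr_bounded _ Bc)].
Qed.

Lemma gradient_difference_quotient z : B1 z ->
  dxr difference_quotient z = (1 / s) * (dxr g (T z) - dxr g z) /\
  dyr difference_quotient z = (1 / s) * (dyr g (T z) - dyr g z).
Proof.
  intros Bz. pose proof (shifts_in_domain z Bz) as Vz. unfold difference_quotient.
  rewrite (dxr_plus _ _ _ _ gT_scaled_regular g_scaled_regular z Vz).
  rewrite (dyr_plus _ _ _ _ gT_scaled_regular g_scaled_regular z Vz).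
  rewrite !dxr_scal, !dyr_scal. unfold T in *.
  rewrite (dxr_shift_flip s 1 0 U g g_regular z (proj1 Vz)), dyr_shift_flip.
  split; field; lra.
Qed.

Lemma gradient_increment_bound :
  Rabs (dxr g (x0 + s, y0) - dxr g (x0, y0)) <= 2 * M1 / a * s /\
  Rabs (dyr g (x0 + s, y0) - dyr g (x0, y0)) <= 2 * M1 / a * s.
Proof.
  assert (B0 : B1 (x0, y0)) by (unfold B1, rect; simpl; lra).
  destruct (gradient_bound_of_bounded_harmonic (fun z => U (T z) /\ U z) difference_quotient
              x0 y0 a M1) as [Qx Qy];
    auto using open_and, difference_quotient_regular, shifts_in_domain,
      difference_quotient_harmonic, difference_quotient_bounded.
  destruct (gradient_difference_quotient _ B0) as [Ex Ey]. rewrite Ex in Qx. rewrite Ey in Qy.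
  unfold T, shift_flip in Qx, Qy. simpl in Qx, Qy.
  replace (s + 1 * x0) with (x0 + s) in Qx, Qy by ring. rewrite Rplus_0_l in Qx, Qy.
  rewrite Rabs_mult, (Rabs_pos_eq (1 / s)) in Qx, Qy by (apply Rlt_le, Rdiv_lt_0_compat; lra).
  split; apply (Rmult_le_reg_l (1 / s)); try (apply Rdiv_lt_0_compat; lra);
    replace (1 / s * (2 * M1 / a * s)) with (2 * M1 / a) by (field; lra); assumption.
Qed.
End DifferenceQuotient.

(** * Harmonic functions on the unit disk *)

Definition sqnorm (z : C) : R := Re z * Re z + Im z * Im z.

Lemma Cmod_sqr_sqnorm z : Cmod z ^ 2 = sqnorm z.
Proof. rewrite Cmod2_alt. unfold sqnorm. ring. Qed.

Lemma in_disk_sqnorm z : in_disk z <-> sqnorm z < 1.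
Proof.
  unfold in_disk. rewrite <- Cmod_sqr_sqnorm. pose proof (Cmod_ge_0 z). split; intros; nra.
Qed.

Lemma continuous_sqnorm z : continuous sqnorm z.
Proof.
  pose proof (continuous_Re z). pose proof (continuous_Im z).
  unfold sqnorm. apply continuous_Rplus; apply continuous_Rmult; assumption.
Qed.

Lemma open_sqnorm_lt r : open (fun z => sqnorm z < r).
Proof.
  apply (open_comp sqnorm (fun u => u < r)); [intros; apply continuous_sqnorm | apply open_lt].
Qed.

Lemma open_disk : open in_disk.
Proof.
  apply (open_ext (fun z => sqnorm z < 1)); [| apply open_sqnorm_lt].
  intro z. symmetry. apply in_disk_sqnorm.
Qed.

Lemma Cmod_le_Rabs_sum (w : C) : Cmod w <= Rabs (Re w) + Rabs (Im w).
Proof.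
  pose proof (Rabs_pos (Re w)). pose proof (Rabs_pos (Im w)). pose proof (Cmod_ge_0 w).
  apply Rsqr_incr_0_var; [| lra]. unfold Rsqr.
  replace (Cmod w * Cmod w) with (Re w ^ 2 + Im w ^ 2) by (rewrite <- Cmod2_alt; ring).
  rewrite <- (pow2_abs (Re w)), <- (pow2_abs (Im w)). nra.
Qed.

Lemma im_le_Cmod (c : C) : Rabs (Im c) <= Cmod c.
Proof. eapply Rle_trans; [apply Rmax_r | apply Rmax_Cmod]. Qed.

Lemma rect_in_disk z0 r z : 0 <= r -> 2 * r < 1 - Cmod z0 ->
  rect (Re z0 - r) (Re z0 + r) (Im z0 - r) (Im z0 + r) z -> in_disk z.
Proof.
  intros Hr Hr2 [Hx Hy]. unfold in_disk.
  replace z with (z0 + (z - z0))%C by (destruct z, z0; apply injective_projections; simpl; ring).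
  eapply Rle_lt_trans; [apply Cmod_triangle |].
  eapply Rle_lt_trans; [apply Rplus_le_compat_l, Cmod_le_Rabs_sum |].
  destruct z as [x y], z0 as [x0 y0]. simpl in *.
  assert (Rabs (x + - x0) <= r) by (apply Rabs_le_between; lra).
  assert (Rabs (y + - y0) <= r) by (apply Rabs_le_between; lra).
  lra.
Qed.

Lemma mul_Derive_nonneg_at_centred_max (f : R -> R) x : ex_derive f x ->
  (forall t, Rabs t <= Rabs x -> f t <= f x) -> 0 <= x * Derive f x.
Proof.
  intros Hd Hmax. pose proof (Derive_correct _ _ Hd) as D.
  destruct (Rtotal_order x 0) as [Hx | [-> | Hx]].
  - cut (Derive f x <= 0); [nra |].
    apply (is_derive_le_of_right_increments f x _ 0 (- x) D); [lra |].
    intros h Hh. assert (f (x + h) <= f x); [| lra].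
    apply Hmax. rewrite !Rabs_left; lra.
  - lra.
  - cut (- 0 <= Derive f x); [nra |].
    apply (is_derive_ge_of_left_increments f x _ 0 x D); [lra |].
    intros h Hh. assert (f (x - h) <= f x); [| lra].
    apply Hmax. rewrite !Rabs_pos_eq; lra.
Qed.

Lemma radial_derivative_nonneg_at_max (f : C -> R) p :
  ex_derive (fun t => f (t, Im p)) (Re p) -> ex_derive (fun t => f (Re p, t)) (Im p) ->
  (forall q, sqnorm q <= sqnorm p -> f q <= f p) ->
  0 <= Re p * dxr f p + Im p * dyr f p.
Proof.
  intros Hx Hy Hmax. destruct p as [x y]. unfold sqnorm in Hmax. simpl in *.
  assert (Square : forall t u, Rabs t <= Rabs u -> t * t <= u * u).
  { intros t u Htu. pose proof (pow2_abs t). pose proof (pow2_abs u). pose proof (Rabs_pos t).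
    nra. }
  pose proof (mul_Derive_nonneg_at_centred_max (fun t => f (t, y)) x Hx
    (fun t Ht => Hmax (t, y) ltac:(simpl; pose proof (Square t x Ht); lra))).
  pose proof (mul_Derive_nonneg_at_centred_max (fun t => f (x, t)) y Hy
    (fun t Ht => Hmax (x, t) ltac:(simpl; pose proof (Square t y Ht); lra))).
  unfold dxr, dyr. simpl. lra.
Qed.

Lemma sqnorm_eq_of_not_interior rho p : sqnorm p <= rho ->
  ~ locally p (fun z => sqnorm z <= rho) -> sqnorm p = rho.
Proof.
  intros Hp Hint. destruct (Req_dec (sqnorm p) rho) as [| Hne]; auto.
  destruct Hint. apply (locally_open (fun z => sqnorm z < rho)).
  - apply open_sqnorm_lt.
  - intros z. apply Rlt_le.
  - lra.
Qed.

Definition u_of_real (h : C -> R) (w : C) : R :=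
  h w + (1 - sqnorm w) / 2 * (Re w * dxr h w + Im w * dyr h w).

Section UpperBound.
Variable h : C -> R.
Hypothesis h_regular : regular_on in_disk h.
Hypothesis h_harmonic : forall z, in_disk z -> laplacian h z = 0.
Hypothesis u_lt_1 : forall z, in_disk z -> u_of_real h z < 1.

Section Perturbation.
Variables (z0 : C) (eps : R).
Hypothesis z0_in_disk : in_disk z0.
Hypothesis eps_pos : 0 < eps.
Let rho := sqnorm z0.
Let K z := sqnorm z <= rho.
Let phi z := h z + quadratic eps eps 0 z.

Let K_in_disk z : K z -> in_disk z /\ True.
Proof.
  intros Kz. split; auto. apply in_disk_sqnorm. apply in_disk_sqnorm in z0_in_disk.
  unfold K, rho in *. lra.
Qed.

Let phi_regular : regular_on (fun z => in_disk z /\ True) phi.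
Proof. apply regular_plus; auto using open_disk, open_true, regular_quadratic. Qed.

Lemma perturbation_max_on_circle : exists p, sqnorm p = rho /\ forall q, K q -> phi q <= phi p.
Proof.
  destruct (max_on_boundary_of_laplacian_pos K (fun z => in_disk z /\ True) phi (-1) 1 (-1) 1)
    as [p [Kp [Hp Hmax]]]; auto.
  - apply (closed_comp sqnorm (fun u => u <= rho));
      [intros; apply continuous_sqnorm | apply closed_le].
  - intros z Kz. destruct (K_in_disk z Kz) as [Dz _]. apply in_disk_sqnorm in Dz.
    unfold sqnorm, rect in *.
    pose proof (Rle_0_sqr (Re z)). pose proof (Rle_0_sqr (Im z)). unfold Rsqr in *.
    split; split; nra.
  - exists z0. apply Rle_refl.
  - intros z Kz _. unfold phi.
    rewrite (laplacian_plus _ _ _ _ open_disk open_true h_regular (regular_quadratic _ _ _) z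
               (K_in_disk z Kz)).
    rewrite h_harmonic, laplacian_quadratic by apply K_in_disk, Kz. lra.
  - exists p. split; auto. apply sqnorm_eq_of_not_interior; auto.
Qed.

Lemma le_1_plus_eps_of_u_lt_1 : h z0 <= 1 + eps.
Proof.
  destruct perturbation_max_on_circle as [p [Ep Hmax]].
  assert (Kp : K p) by (unfold K; lra).
  destruct (phi_regular p (K_in_disk p Kp)) as [Dx [Dy _]].
  assert (Radial := radial_derivative_nonneg_at_max phi p Dx Dy
                      (fun q Hq => Hmax q ltac:(unfold K; lra))).
  unfold phi in Radial.
  rewrite (dxr_plus _ _ _ _ h_regular (regular_quadratic _ _ _) p (K_in_disk p Kp)) in Radial.
  rewrite (dyr_plus _ _ _ _ h_regular (regular_quadratic _ _ _) p (K_in_disk p Kp)) in Radial.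
  rewrite dxr_quadratic, dyr_quadratic in Radial.
  assert (Up := u_lt_1 p (proj1 (K_in_disk p Kp))). unfold u_of_real in Up. rewrite Ep in Up.
  assert (M0 := Hmax z0 (Rle_refl _)). unfold phi, quadratic in M0.
  assert (Ep' : Re p * Re p + Im p * Im p = rho) by exact Ep.
  assert (rho_range : 0 <= rho < 1).
  { apply in_disk_sqnorm in z0_in_disk. unfold rho, sqnorm in *. nra. }
  assert ((1 - rho) / 2 * (Re p * dxr h p + Im p * dyr h p) >= - eps).
  { assert (eps * (Re p * Re p + Im p * Im p) = eps * rho) by (rewrite Ep'; ring).
    assert (Re p * dxr h p + Im p * dyr h p >= - 2 * eps * rho) by lra.
    assert ((1 - rho) / 2 * (Re p * dxr h p + Im p * dyr h p) >= (1 - rho) / 2 * (- 2 * eps * rho))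
      by (apply Rle_ge, Rmult_le_compat_l; lra).
    nra. }
  unfold rho, sqnorm in *. nra.
Qed.
End Perturbation.

Lemma le_1_of_u_lt_1 z : in_disk z -> h z <= 1.
Proof. intros Dz. apply le_epsilon. intros eps He. apply le_1_plus_eps_of_u_lt_1; auto. Qed.
End UpperBound.

Lemma bounded_of_u_of_real_bounded h :
  regular_on in_disk h -> (forall z, in_disk z -> laplacian h z = 0) ->
  (forall z, in_disk z -> Rabs (u_of_real h z) < 1) -> forall z, in_disk z -> Rabs (h z) <= 1.
Proof.
  intros Hr Hl Hu z Dz. apply Rabs_le_between. split.
  - cut (-1 * h z <= 1); [lra |].
    apply (le_1_of_u_lt_1 (fun w => -1 * h w)); auto.
    + apply regular_scal. exact Hr.
    + intros w Dw. rewrite laplacian_scal, Hl; auto. ring.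
    + intros w Dw. specialize (Hu w Dw). apply Rabs_lt_between in Hu.
      unfold u_of_real in *. rewrite dxr_scal, dyr_scal. nra.
  - apply (le_1_of_u_lt_1 h); auto. intros w Dw. specialize (Hu w Dw).
    apply Rabs_lt_between in Hu. lra.
Qed.

Lemma regular_of_C2 h : C2_on_disk h -> regular_on in_disk h.
Proof.
  intros HC z Dz. destruct (HC z Dz) as [A [B [Cx [_ [_ [Dy [E _]]]]]]]. repeat split; auto.
Qed.

Section LocalDerivativeBounds.
Variable h : C -> R.
Hypothesis h_C2 : C2_on_disk h.
Hypothesis h_harmonic : forall z, in_disk z -> laplacian h z = 0.
Hypothesis h_bounded : forall z, in_disk z -> Rabs (h z) <= 1.
Variables x0 y0 : R.
Hypothesis z0_in_disk : in_disk (x0, y0).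
Let d := 1 - Cmod (x0, y0).
Let a := d / 8.
Let B2 := rect (x0 - 2 * a) (x0 + 2 * a) (y0 - 2 * a) (y0 + 2 * a).

Lemma dist_to_circle_pos : 0 < d /\ d <= 1.
Proof. unfold d. unfold in_disk in z0_in_disk. pose proof (Cmod_ge_0 (x0, y0)). lra. Qed.

Lemma B2_in_disk z : B2 z -> in_disk z.
Proof.
  destruct dist_to_circle_pos. apply (rect_in_disk (x0, y0) (2 * a)); unfold a; fold d; lra.
Qed.

Lemma gradient_bound_near c : B2 c -> Rabs (dxr h c) <= 2 / a /\ Rabs (dyr h c) <= 2 / a.
Proof.
  intros Hc. destruct dist_to_circle_pos. destruct c as [cx cy].
  assert (Sub : forall z, rect (cx - a) (cx + a) (cy - a) (cy + a) z -> in_disk z).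
  { intros z Hz. apply (rect_in_disk (x0, y0) (3 * a)); unfold a in *; fold d; [lra | lra |].
    unfold B2, rect in *. simpl in *. lra. }
  replace (2 / a) with (2 * 1 / a) by (unfold Rdiv; ring).
  apply (gradient_bound_of_bounded_harmonic in_disk); auto.
  - apply open_disk.
  - apply regular_of_C2, h_C2.
  - unfold a. lra.
Qed.

Lemma first_derivative_bounds :
  d * Rabs (dxr h (x0, y0)) <= 16 /\ d * Rabs (dyr h (x0, y0)) <= 16.
Proof.
  destruct dist_to_circle_pos.
  destruct (gradient_bound_near (x0, y0)) as [Gx Gy]; [unfold B2, rect, a; simpl; lra |].
  replace (2 / a) with (16 / d) in Gx, Gy by (unfold a; field; lra).
  apply (Rmult_le_compat_l d) in Gx, Gy; try lra.
  replace (d * (16 / d)) with 16 in Gx, Gy by (field; lra). auto.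
Qed.

Lemma second_derivative_bounds :
  d * d * Rabs (dxr (dxr h) (x0, y0)) <= 256 /\ d * d * Rabs (dxr (dyr h) (x0, y0)) <= 256 /\
  d * d * Rabs (dyr (dxr h) (x0, y0)) <= 256 /\ d * d * Rabs (dyr (dyr h) (x0, y0)) <= 256.
Proof.
  destruct dist_to_circle_pos.
  assert (Ha : 0 < a) by (unfold a; lra).
  assert (Scale : forall X, Rabs X <= 2 * (2 / a) / a -> d * d * Rabs X <= 256).
  { intros X HX. replace (2 * (2 / a) / a) with (256 / (d * d)) in HX by (unfold a; field; lra).
    apply (Rmult_le_compat_l (d * d)) in HX; [| nra].
    replace (d * d * (256 / (d * d))) with 256 in HX by (field; lra). exact HX. }
  destruct (h_C2 (x0, y0) z0_in_disk) as [_ [_ [Exx [Exy [Eyx [Eyy _]]]]]]. simpl in *.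
  pose proof (gradient_increment_bound in_disk h x0 y0 a (2 / a) open_disk
    (regular_of_C2 h h_C2) Ha B2_in_disk (fun z Hz => h_harmonic z (B2_in_disk z Hz))
    (fun z Hz => proj1 (gradient_bound_near z Hz))) as Incr_x.
  assert (Swap : forall z, rect (y0 - 2 * a) (y0 + 2 * a) (x0 - 2 * a) (x0 + 2 * a) z ->
                   B2 (swap_xy z)).
  { intros z [[H1 H2] [H3 H4]]. split; split; assumption. }
  pose proof (gradient_increment_bound (fun z => in_disk (swap_xy z)) (fun w => h (swap_xy w))
    y0 x0 a (2 / a) (open_swap _ open_disk) (regular_swap _ _ (regular_of_C2 h h_C2)) Ha
    (fun z Hz => B2_in_disk _ (Swap z Hz))
    (fun z Hz => eq_trans (laplacian_swap h z) (h_harmonic _ (B2_in_disk _ (Swap z Hz))))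
    (fun z Hz => proj2 (gradient_bound_near _ (Swap z Hz)))) as Incr_y.
  repeat split; apply Scale.
  - apply (Rabs_is_derive_le (fun t => dxr h (t, y0)) x0 _ _ a (Derive_correct _ _ Exx) Ha).
    intros s Hs. exact (proj1 (Incr_x s Hs)).
  - apply (Rabs_is_derive_le (fun t => dyr h (t, y0)) x0 _ _ a (Derive_correct _ _ Eyx) Ha).
    intros s Hs. exact (proj2 (Incr_x s Hs)).
  - apply (Rabs_is_derive_le (fun t => dxr h (x0, t)) y0 _ _ a (Derive_correct _ _ Exy) Ha).
    intros s Hs. exact (proj2 (Incr_y s Hs)).
  - apply (Rabs_is_derive_le (fun t => dyr h (x0, t)) y0 _ _ a (Derive_correct _ _ Eyy) Ha).
    intros s Hs. exact (proj1 (Incr_y s Hs)).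
Qed.
End LocalDerivativeBounds.

(** * The Bloch bound *)

Lemma Re_u_of H z : Re (u_of H z) = u_of_real (fun w => Re (H w)) z.
Proof.
  unfold u_of, u_of_real, dz, dzb, dx, dy. rewrite Cmod_sqr_sqnorm.
  generalize (dxr (fun w => Re (H w)) z) (dyr (fun w => Re (H w)) z)
             (dxr (fun w => Im (H w)) z) (dyr (fun w => Im (H w)) z).
  intros. destruct (H z), z. unfold sqnorm. simpl. field.
Qed.

Lemma Im_u_of H z : Im (u_of H z) = u_of_real (fun w => Im (H w)) z.
Proof.
  unfold u_of, u_of_real, dz, dzb, dx, dy. rewrite Cmod_sqr_sqnorm.
  generalize (dxr (fun w => Re (H w)) z) (dyr (fun w => Re (H w)) z)
             (dxr (fun w => Im (H w)) z) (dyr (fun w => Im (H w)) z).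
  intros. destruct (H z), z. unfold sqnorm. simpl. field.
Qed.

Lemma is_derive_radial_correction (f1 f2 f3 : R -> R) x y :
  ex_derive f1 x -> ex_derive f2 x -> ex_derive f3 x ->
  is_derive (fun t => f1 t + (1 - (t * t + y * y)) / 2 * (t * f2 t + y * f3 t)) x
    (Derive f1 x - x * (x * f2 x + y * f3 x) +
     (1 - (x * x + y * y)) / 2 * (f2 x + x * Derive f2 x + y * Derive f3 x)).
Proof.
  intros E1 E2 E3. auto_derive; [repeat split; auto |].
  change (fun t => f1 t) with f1. change (fun t => f2 t) with f2. change (fun t => f3 t) with f3.
  generalize (Derive f1 x) (Derive f2 x) (Derive f3 x) (f2 x) (f3 x). intros. field.
Qed.

Lemma dxr_u_of_real h (x y : R) :
  ex_derive (fun t => h (t, y)) x -> ex_derive (fun t => dxr h (t, y)) x ->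
  ex_derive (fun t => dyr h (t, y)) x ->
  dxr (u_of_real h) (x, y) = dxr h (x, y) - x * (x * dxr h (x, y) + y * dyr h (x, y))
     + (1 - (x * x + y * y)) / 2 * (dxr h (x, y) + x * dxr (dxr h) (x, y) + y * dxr (dyr h) (x, y)).
Proof.
  intros E1 E2 E3. apply is_derive_unique.
  exact (is_derive_radial_correction (fun t => h (t, y)) (fun t => dxr h (t, y))
           (fun t => dyr h (t, y)) x y E1 E2 E3).
Qed.

Lemma dyr_u_of_real h (x y : R) :
  ex_derive (fun t => h (x, t)) y -> ex_derive (fun t => dyr h (x, t)) y ->
  ex_derive (fun t => dxr h (x, t)) y ->
  dyr (u_of_real h) (x, y) = dyr h (x, y) - y * (y * dyr h (x, y) + x * dxr h (x, y))
     + (1 - (y * y + x * x)) / 2 * (dyr h (x, y) + y * dyr (dyr h) (x, y) + x * dyr (dxr h) (x, y)).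
Proof.
  intros E1 E2 E3. apply is_derive_unique.
  apply (is_derive_ext (fun t => h (x, t) + (1 - (t * t + x * x)) / 2 *
                                   (t * dyr h (x, t) + x * dxr h (x, t)))).
  { intro t. unfold u_of_real, sqnorm. simpl. field. }
  exact (is_derive_radial_correction (fun t => h (x, t)) (fun t => dyr h (x, t))
           (fun t => dxr h (x, t)) y x E1 E2 E3).
Qed.

Lemma Rabs_half_sum_diff u v : Rabs ((u + v) / 2) + Rabs ((u - v) / 2) <= Rabs u + Rabs v.
Proof. unfold Rabs. repeat destruct Rcase_abs; lra. Qed.

Lemma Cmod_dz_dzb_le (f : C -> C) (p q : C -> R) z :
  (forall w, Re (f w) = p w) -> (forall w, Im (f w) = q w) ->
  Cmod (dz f z) + Cmod (dzb f z) <=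
    Rabs (dxr p z) + Rabs (dxr q z) + Rabs (dyr p z) + Rabs (dyr q z).
Proof.
  intros Hp Hq.
  assert (Ep : forall w, (fun w => Re (f w)) w = p w) by exact Hp.
  assert (Eq : forall w, (fun w => Im (f w)) w = q w) by exact Hq.
  unfold dz, dzb, dx, dy, dxr, dyr.
  rewrite !(Derive_ext _ _ _ (fun t => Ep _)), !(Derive_ext _ _ _ (fun t => Eq _)).
  generalize (Derive (fun t => p (t, Im z)) (Re z)) (Derive (fun t => q (t, Im z)) (Re z))
             (Derive (fun t => p (Re z, t)) (Im z)) (Derive (fun t => q (Re z, t)) (Im z)).
  intros a b c d.
  pose proof (Cmod_le_Rabs_sum (/ 2 * ((a, b) - Ci * (c, d)))%C) as Hz.
  pose proof (Cmod_le_Rabs_sum (/ 2 * ((a, b) + Ci * (c, d)))%C) as Hzb.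
  replace (Re (/ 2 * ((a, b) - Ci * (c, d)))%C) with ((a + d) / 2) in Hz by (simpl; field).
  replace (Im (/ 2 * ((a, b) - Ci * (c, d)))%C) with ((b - c) / 2) in Hz by (simpl; field).
  replace (Re (/ 2 * ((a, b) + Ci * (c, d)))%C) with ((a - d) / 2) in Hzb by (simpl; field).
  replace (Im (/ 2 * ((a, b) + Ci * (c, d)))%C) with ((c + b) / 2) in Hzb by (simpl; field).
  replace ((b - c) / 2) with (- ((c - b) / 2)) in Hz by field. rewrite Rabs_Ropp in Hz.
  pose proof (Rabs_half_sum_diff a d). pose proof (Rabs_half_sum_diff c b). lra.
Qed.

Lemma Rabs_mul_le x y : Rabs x <= 1 -> Rabs (x * y) <= Rabs y.
Proof. intros H. rewrite Rabs_mult. pose proof (Rabs_pos y). pose proof (Rabs_pos x). nra. Qed.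

(* The shape of [dxr (u_of_real h)] (see [dxr_u_of_real]), with [e = 1 - |z|^2 <= 2 d]
   and [d = 1 - |z|]. *)
Lemma weighted_derivative_bound e d A B P Q x y : 0 < d <= 1 -> 0 <= e <= 2 * d ->
  Rabs x <= 1 -> Rabs y <= 1 ->
  d * Rabs A <= 16 -> d * Rabs B <= 16 -> d * d * Rabs P <= 256 -> d * d * Rabs Q <= 256 ->
  e * Rabs (A - x * (x * A + y * B) + e / 2 * (A + x * P + y * Q)) <= 1200.
Proof.
  intros Hd He Hx Hy HA HB HP HQ.
  pose proof (Rabs_mul_le x A Hx). pose proof (Rabs_mul_le y B Hy).
  pose proof (Rabs_mul_le x P Hx). pose proof (Rabs_mul_le y Q Hy).
  pose proof (Rabs_mul_le x (x * A + y * B) Hx).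
  pose proof (Rabs_triang (x * A) (y * B)). pose proof (Rabs_triang A (x * P)).
  pose proof (Rabs_triang (A + x * P) (y * Q)).
  pose proof (Rabs_triang (A - x * (x * A + y * B)) (e / 2 * (A + x * P + y * Q))).
  pose proof (Rabs_triang A (- (x * (x * A + y * B)))).
  rewrite Rabs_Ropp in *. unfold Rminus in *.
  assert (Rabs (e / 2 * (A + x * P + y * Q)) = e / 2 * Rabs (A + x * P + y * Q))
    by (rewrite Rabs_mult, (Rabs_pos_eq (e / 2)) by lra; reflexivity).
  set (a := Rabs A) in *. set (b := Rabs B) in *. set (p := Rabs P) in *. set (q := Rabs Q) in *.
  assert (0 <= a) by apply Rabs_pos. assert (0 <= b) by apply Rabs_pos.
  assert (0 <= p) by apply Rabs_pos. assert (0 <= q) by apply Rabs_pos.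
  assert (T : Rabs (A + - (x * (x * A + y * B)) + e / 2 * (A + x * P + y * Q))
              <= 2 * a + b + e / 2 * (a + p + q)).
  { assert (e / 2 * Rabs (A + x * P + y * Q) <= e / 2 * (a + p + q))
      by (apply Rmult_le_compat_l; lra). lra. }
  assert (e * a <= 32) by nra. assert (e * b <= 32) by nra.
  assert (e * e <= 4 * (d * d)) by nra.
  assert (Hsq : forall v, 0 <= v -> e * e * v <= 4 * (d * d) * v)
    by (intros; apply Rmult_le_compat_r; lra).
  assert (e * e * a <= 64) by (specialize (Hsq a ltac:(lra)); nra).
  assert (e * e * p <= 1024) by (specialize (Hsq p ltac:(lra)); nra).
  assert (e * e * q <= 1024) by (specialize (Hsq q ltac:(lra)); nra).
  apply Rle_trans with (e * (2 * a + b + e / 2 * (a + p + q)));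
    [apply Rmult_le_compat_l; lra | lra].
Qed.

Lemma u_of_real_Bloch_bound h : C2_on_disk h -> (forall z, in_disk z -> laplacian h z = 0) ->
  (forall z, in_disk z -> Rabs (h z) <= 1) -> forall z, in_disk z ->
  (1 - sqnorm z) * (Rabs (dxr (u_of_real h) z) + Rabs (dyr (u_of_real h) z)) <= 2400.
Proof.
  intros HC HL Hb [x y] Dz.
  destruct (dist_to_circle_pos x y Dz) as [dp d1].
  destruct (first_derivative_bounds h HC HL Hb x y Dz) as [F1 F2].
  destruct (second_derivative_bounds h HC HL Hb x y Dz) as [S1 [S2 [S3 S4]]].
  destruct (HC (x, y) Dz) as [E1 [E2 [E3 [E4 [E5 [E6 _]]]]]]. simpl in E1, E2, E3, E4, E5, E6.
  rewrite (dxr_u_of_real h x y E1 E3 E5), (dyr_u_of_real h x y E2 E6 E4).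
  unfold sqnorm. simpl. set (d := 1 - Cmod (x, y)) in *.
  pose proof (re_le_Cmod (x, y)). pose proof (im_le_Cmod (x, y)). pose proof (Cmod_ge_0 (x, y)).
  pose proof (Cmod_sqr_sqnorm (x, y)). unfold in_disk, sqnorm in *. simpl in *.
  assert (He : 0 <= 1 - (x * x + y * y) <= 2 * d) by (unfold d; split; nra).
  pose proof (weighted_derivative_bound (1 - (x * x + y * y)) d _ _ _ _ x y
                (conj dp d1) He ltac:(lra) ltac:(lra) F1 F2 S1 S2).
  replace (1 - (y * y + x * x)) with (1 - (x * x + y * y)) by ring.
  pose proof (weighted_derivative_bound (1 - (x * x + y * y)) d _ _ _ _ y x
                (conj dp d1) He ltac:(lra) ltac:(lra) F2 F1 S4 S3).
  lra.
Qed.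

Theorem corollary4 (H : C -> C) :
  harmonic_on_disk H ->
  (forall z, in_disk z -> in_disk (u_of H z)) ->
  exists c : R, 0 < c /\
    forall z, in_disk z ->
      (1 - Cmod z ^ 2) * (Cmod (dz (u_of H) z) + Cmod (dzb (u_of H) z)) <= c.
Proof.
  intros [[HC1 HL1] [HC2 HL2]] Hu.
  assert (U1 : forall z, in_disk z -> Rabs (u_of_real (fun w => Re (H w)) z) < 1).
  { intros z Dz. rewrite <- Re_u_of. eapply Rle_lt_trans; [apply re_le_Cmod | apply Hu, Dz]. }
  assert (U2 : forall z, in_disk z -> Rabs (u_of_real (fun w => Im (H w)) z) < 1).
  { intros z Dz. rewrite <- Im_u_of. eapply Rle_lt_trans; [apply im_le_Cmod | apply Hu, Dz]. }
  pose proof (bounded_of_u_of_real_bounded _ (regular_of_C2 _ HC1) HL1 U1) as B1.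
  pose proof (bounded_of_u_of_real_bounded _ (regular_of_C2 _ HC2) HL2 U2) as B2.
  exists 4800. split; [lra |]. intros z Dz.
  pose proof (u_of_real_Bloch_bound _ HC1 HL1 B1 z Dz).
  pose proof (u_of_real_Bloch_bound _ HC2 HL2 B2 z Dz).
  pose proof (Cmod_dz_dzb_le (u_of H) _ _ z (Re_u_of H) (Im_u_of H)).
  assert (0 <= 1 - sqnorm z) by (apply in_disk_sqnorm in Dz; lra).
  rewrite Cmod_sqr_sqnorm. nra.
Qed.
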